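(* Let $\Gamma$ be a countable group with a covering family $\mathcal E$ of malnormal subgroups and $\alpha>0$ such that $\Gamma$ satisfies $\mathbf K\geq_{\text{local}}\alpha$ relatively to $\mathcal E$. There exists $\bar\delta=\bar\delta(\alpha)>0$ such that for any path connected component $R$ of $[\mathcal S^*(\Gamma)/\Gamma]^{\leq\bar\delta}$ and any base point $r_0\in R$, there is $H_R\in\mathcal E$ such that $\iota_*(\pi_1(R,r_0))$ is a subgroup of $H_R$, where $\iota:R\to\mathcal S^*(\Gamma)/\Gamma$ is the inclusion and $\pi_1(\mathcal S^*(\Gamma)/\Gamma,\iota(r_0))$ is identified with $\Gamma$ (by a fixed identification, well defined up to conjugacy).
   Context: Let $\mathbf H$ be the separable infinite-dimensional real Hilbert space; $\mathcal S(\Gamma)$ is the unit sphere of $\ell^2(\Gamma,\mathbf H)$ with $\Gamma$ acting by $(\gamma.f)(x)=f(\gamma^{-1}x)$, $\mathcal S^*(\Gamma)=\{f:\gamma.f\ne f\ \forall\gamma\neq e\}$, and $\mathcal S^*(\Gamma)/\Gamma$ (quotient $\ell^2$ metric) is a classifying space for $\Gamma$, so its fundamental group is isomorphic to $\Gamma$. Thin part: with $\Pi$ the projection and $\mathbf d$ the $\ell^2$ distance, $[\mathcal S^*(\Gamma)/\Gamma]^{\leq\delta}=\Pi(\{x\in\mathcal S^*(\Gamma):\mathbf d(x,\gamma.x)\le\delta\text{ for some }\gamma\in\Gamma\setminus\{e\}\})$. For a group $G$ with regular representation $\rho_G$ on $\ell^2(G)$ and finite $S\subset G$, $\mathbf K(\rho_G,G,S)=\inf_{u\neq0}\max_{s\in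 S}\|s.u-u\|_{\ell^2}/\|u\|_{\ell^2}$. A subgroup $H$ is malnormal if $gHg^{-1}\cap H=\{e\}$ for $g\notin H$; $\mathcal E$ is covering if every element of $\Gamma$ lies in some member of $\mathcal E$; $\Gamma$ satisfies $\mathbf K\geq_{\text{local}}\alpha$ relatively to $\mathcal E$ if $\mathbf K(\rho_{\langle x,y\rangle},\langle x,y\rangle,\{x,y\})\geq\alpha$ whenever $H\in\mathcal E$, $x\in H\setminus\{e\}$, $y\notin H$. *)

From mathcomp Require Import all_boot all_order all_algebra.
From mathcomp Require Import all_classical all_reals all_analysis.
Set Implicit Arguments. Unset Strict Implicit. Unset Printing Implicit Defensive.
Import Order.TTheory GRing.Theory Num.Theory.
Local Open Scope classical_set_scope.
Local Open Scope ring_scope.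

Record cgroup := CGroup {
  gcar :> countType;
  gmul : gcar -> gcar -> gcar;
  gone : gcar;
  ginv : gcar -> gcar;
  gmulA : forall x y z, gmul x (gmul y z) = gmul (gmul x y) z;
  gmul1 : forall x, gmul gone x = x;
  gmulV : forall x, gmul (ginv x) x = gone }.

Section Defs.
Variables (R : realType) (G : cgroup).
Local Notation "x * y" := (gmul x y).
Local Notation "x ^-1" := (ginv x).
Local Notation e := (gone G).

Definition subgroup (S : set G) : Prop :=
  S e /\ (forall x y, S x -> S y -> S (x * y)) /\ (forall x, S x -> S x^-1).
Definition gen2 (x y : G) : set G :=
  [set z | forall S, subgroup S -> S x -> S y -> S z].
Definition malnormal (H : set G) : Prop :=
  subgroup H /\ forall g h, ~ H g -> H h -> H (g * h * g^-1) -> h = e.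
Definition covering (E : set (set G)) : Prop :=
  forall g, exists2 H, E H & H g.

Definition sqsum (u : G -> R) : \bar R := (\esum_(z in setT) ((u z) ^+ 2)%:E)%E.
Definition l2norm (u : G -> R) : R := Num.sqrt (fine (sqsum u)).
Definition lreg (s : G) (u : G -> R) : G -> R := fun z => u (s^-1 * z).
(* K(rho_{<x,y>}, <x,y>, {x,y}): vectors of ell^2(<x,y>) are realised as
   square-summable functions on G supported in <x,y> *)
Definition Kxy (x y : G) : R :=
  inf [set r | exists u : G -> R,
        [/\ (forall z, u z != 0 -> gen2 x y z), (sqsum u < +oo)%E,
            (exists z, u z != 0) &
            r = Num.max (l2norm (fun z => lreg x u z - u z))
                        (l2norm (fun z => lreg y u z - u z)) / l2norm u]].
Definition K_local_ge (E : set (set G)) (alpha : R) : Prop :=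
  forall H x y, E H -> H x -> x <> e -> ~ H y -> alpha <= Kxy x y.

(* H = ell^2(nat, R) (separable infinite-dim real Hilbert space);
   ell^2(G, H) = functions f : G -> nat -> R with sum_x ||f x||^2 < oo *)
Definition vec := G -> nat -> R.
Definition sqnormV (f : vec) : \bar R :=
  (\esum_(x in setT) \esum_(n in setT) ((f x n) ^+ 2)%:E)%E.
Definition distV (f g : vec) : R := Num.sqrt (fine (sqnormV (fun x n => f x n - g x n))).
Definition actV (g : G) (f : vec) : vec := fun x => f (g^-1 * x).
Definition sphere (f : vec) : Prop := sqnormV f = 1%E.
Definition Sstar (f : vec) : Prop := sphere f /\ forall g, g <> e -> actV g f <> f.

(* The quotient S*(G)/G: a point is represented by any f in S*; two
   representatives give the same point iff they are in the same orbit;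
   quotient ell^2 metric. *)
Definition orbit_eq (f f' : vec) : Prop := exists g, f' = actV g f.
Definition qdist (f f' : vec) : R := inf [set distV f (actV g f') | g in setT].

(* Thin part (as a set of representatives, closed under the orbit relation) *)
Definition thin (delta : R) (f : vec) : Prop :=
  Sstar f /\ exists y, [/\ Sstar y, orbit_eq f y &
                          exists2 g, g <> e & distV y (actV g y) <= delta].

Definition I01 : set R := `[0, 1]%classic.
(* continuous paths [0,1] -> S*(G)/G, given by representatives *)
Definition qpath (p : R -> vec) : Prop :=
  (forall t, I01 t -> Sstar (p t)) /\
  forall t, I01 t -> forall eps, 0 < eps -> exists2 eta, 0 < eta &
    forall s, I01 s -> `|s - t| < eta -> qdist (p s) (p t) < eps.
Definition spath (q : R -> vec) : Prop :=
  (forall t, I01 t -> Sstar (q t)) /\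
  forall t, I01 t -> forall eps, 0 < eps -> exists2 eta, 0 < eta &
    forall s, I01 s -> `|s - t| < eta -> distV (q s) (q t) < eps.

Definition pathcomp (A : vec -> Prop) (r0 : vec) : set vec :=
  [set f | Sstar f /\ exists p, [/\ qpath p, orbit_eq (p 0) r0, orbit_eq (p 1) f &
                                   forall t, I01 t -> A (p t)]].
End Defs.

(* Fix x on the unit sphere, g <> 1 in some H of E and g' outside H, and cut
   l^2(G, l^2) along the right cosets Lc of L = <g, g'>.  By pigeonhole some
   coset carries a share of the displacement |x - g.x|^2 + |x - g'.x|^2 at most
   proportional to its share of the mass of x; on it, z |-> |x(zc)| is a test
   vector of l^2(L) whose displacements under g and g' are bounded by those of
   x (reverse triangle inequality).  Hence
     alpha <= K(g, g') <= sqrt (d(x, g.x)^2 + d(x, g'.x)^2).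
   With delta = alpha/4: if g in H has displacement <= 3 delta at a point, every
   element of displacement <= delta there lies in H as well.  Along a path q in
   the thin part, "some nontrivial element of H is delta-short at q(t)" is thus
   locally constant in t, hence holds at q(1) = h.x0; then h^-1 g h is short at
   x0, so lies in H, and malnormality forces h into H. *)

From mathcomp Require Import all_boot all_order all_algebra.
From mathcomp Require Import all_classical all_reals all_analysis.
From mathcomp Require Import ring lra.
Set Implicit Arguments. Unset Strict Implicit. Unset Printing Implicit Defensive.
Import Order.TTheory GRing.Theory Num.Theory.
Local Open Scope classical_set_scope.
Local Open Scope ring_scope.

Section RealInequalities.
Variable R : realType.

Lemma sqrD_le_weighted (x y c : R) : 0 < c ->
  (x + y) ^+ 2 <= (1 + c) * x ^+ 2 + (1 + c^-1) * y ^+ 2.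
Proof.
move=> c0; have cV0 : 0 < c^-1 by rewrite invr_gt0.
have cV : c * c^-1 = 1 by rewrite mulfV // gt_eqF.
have : 0 <= c^-1 * (c * x - y) ^+ 2 by rewrite mulr_ge0 ?sqr_ge0 ?ltW.
have -> : c^-1 * (c * x - y) ^+ 2 =
  c * (c * c^-1) * x ^+ 2 - 2 * (c * c^-1) * x * y + c^-1 * y ^+ 2 by ring.
rewrite cV; nra.
Qed.

(* The weight [c = (b + e) / (a + e)] makes the bound [(a + b + 2 e) (a + b)];
   letting [e] go to [0] gives [(a + b)^2]. *)
Lemma le_sqrD_of_weighted (X a b : R) : 0 <= a -> 0 <= b ->
  (forall c, 0 < c -> X <= (1 + c) * a ^+ 2 + (1 + c^-1) * b ^+ 2) ->
  X <= (a + b) ^+ 2.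
Proof.
move=> a0 b0 hX; apply/ler_addgt0Pr => e e0.
have k0 : 0 < 2 * (a + b) + 1 by lra.
set eps := e / (2 * (a + b) + 1).
have eps0 : 0 < eps by rewrite divr_gt0.
have epsk : eps * (2 * (a + b) + 1) = e by rewrite /eps mulfVK // gt_eqF.
have weight (s u v : R) : 0 <= s <= u -> 0 < u -> 0 < v ->
    (1 + v / u) * s ^+ 2 <= (u + v) * s.
  move=> /andP[s0 su] u0 v0.
  have -> : (1 + v / u) * s ^+ 2 = (u + v) * (s ^+ 2 / u) by field; rewrite gt_eqF.
  by rewrite ler_wpM2l ?ler_pdivrMr // ?expr2 ?ler_wpM2l //; lra.
have ua : 0 < a + eps by lra.
have vb : 0 < b + eps by lra.
have ha : (1 + (b + eps) / (a + eps)) * a ^+ 2 <= (a + eps + (b + eps)) * a.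
  by apply: weight => //; rewrite a0 lerDl ltW.
have hb : (1 + (a + eps) / (b + eps)) * b ^+ 2 <= (b + eps + (a + eps)) * b.
  by apply: weight => //; rewrite b0 lerDl ltW.
have := hX _ (divr_gt0 vb ua); rewrite invf_div; nra.
Qed.

End RealInequalities.

Section ExtendedSums.
Variable R : realType.
Local Open Scope ereal_scope.

Lemma ge0_esumZl (T : choiceType) (S : set T) (k : R) (a : T -> \bar R) :
  (0 <= k)%R -> (forall i, 0 <= a i) ->
  \esum_(i in S) (k%:E * a i) = k%:E * \esum_(i in S) a i.
Proof.
move=> k0 a0; rewrite /esum -ereal_supZl //; last first.
  by apply/set0P; exists 0; exists set0; [exact: fsets_set0 | rewrite fsbig_set0].
congr ereal_sup; apply/seteqP; split => y /=.
  by move=> [X XS <-]; exists (\sum_(i \in X) a i); [exists X | rewrite ge0_mule_fsumr].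
by move=> [z [X XS <-] <-]; exists X => //; rewrite ge0_mule_fsumr.
Qed.

Lemma esum_ge_term (T : choiceType) (S : set T) (a : T -> \bar R) i :
  (forall j, S j -> 0 <= a j) -> S i -> a i <= \esum_(j in S) a j.
Proof.
move=> a0 Si; apply: esum_ge; exists [set i]; last by rewrite fsbig_set1.
by split; [exact: finite_set1 | move=> j ->].
Qed.

Lemma esum_pigeonhole (T : choiceType) (S : set T) (a b : T -> \bar R) (A : R) :
  (forall c, 0 <= a c) -> (forall c, 0 <= b c) ->
  \esum_(c in S) a c = A%:E -> \esum_(c in S) b c = 1 ->
  exists c, [/\ S c, 0 < b c & a c <= A%:E * b c].
Proof.
move=> a0 b0 sa sb; apply: contrapT => nex.
have small c : S c -> 0 < b c -> A%:E * b c < a c.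
  by move=> Sc bc; rewrite ltNge; apply/negP => acb; apply: nex; exists c.
have A0 : (0 <= A)%R by rewrite -lee_fin -sa esum_ge0.
have [c0 Sc0 bc0] : exists2 c0, S c0 & 0 < b c0.
  apply: contrapT => nb; move: sb; rewrite esum1 => [/eqP|c Sc].
    by rewrite eqe eq_sym oner_eq0.
  by apply/eqP; rewrite eq_le b0 andbT leNgt; apply/negP => bc; apply: nb; exists c.
have afin c : S c -> a c \is a fin_num.
  by move=> Sc; rewrite ge0_fin_numE // (le_lt_trans _ (ltry A)) // -sa esum_ge_term.
have bfin c : S c -> b c \is a fin_num.
  by move=> Sc; rewrite ge0_fin_numE // (le_lt_trans _ (ltry 1%R)) // -sb esum_ge_term.
(* Otherwise [a >= A b] on [S], strictly at [c0], and summing gives [A > A]. *)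
pose d c := a c - A%:E * b c.
have d0 c : S c -> 0 <= d c.
  move=> Sc; rewrite subre_ge0 ?afin //.
  have [bc|bc] := ltP 0 (b c); first exact/ltW/small.
  have -> : b c = 0 by apply/le_anti; rewrite bc b0.
  by rewrite mule0.
have sad : \esum_(c in S) a c = A%:E + \esum_(c in S) d c.
  rewrite -[A%:E in RHS]mule1 -sb -ge0_esumZl // -esumD => [|c _|c Sc]; last 2 first.
  - by rewrite mule_ge0.
  - exact: d0.
  by apply: eq_esum => c Sc; rewrite /d addeC subeK // fin_numM ?bfin.
have : A%:E + d c0 <= A%:E by rewrite -[leRHS]sa sad leeD2l // esum_ge_term.
by rewrite -[leRHS]adde0 leeD2lE // leNgt sube_gt0 small.
Qed.

End ExtendedSums.

Section SquareNorm.
Variable R : realType.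
Local Open Scope ereal_scope.

Definition sqnorm (T : choiceType) (a : T -> R) : \bar R :=
  \esum_(i in [set: T]) ((a i) ^+ 2)%:E.

Definition norm2 (T : choiceType) (a : T -> R) : R := Num.sqrt (fine (sqnorm a)).

Variable T : choiceType.
Implicit Types a b : T -> R.

Lemma sqnorm_ge0 a : 0 <= sqnorm a.
Proof. by apply: esum_ge0 => i _; rewrite lee_fin sqr_ge0. Qed.

Lemma norm2_ge0 a : (0 <= norm2 a)%R.
Proof. exact: sqrtr_ge0. Qed.

Lemma sqnorm_norm2 a : sqnorm a < +oo -> sqnorm a = (norm2 a ^+ 2)%:E.
Proof.
move=> aoo; rewrite sqr_sqrtr ?fine_ge0 ?sqnorm_ge0 // fineK //.
by rewrite ge0_fin_numE ?sqnorm_ge0.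
Qed.

Lemma sqnormN a : sqnorm (fun i => - a i)%R = sqnorm a.
Proof. by apply: eq_esum => i _; rewrite sqrrN. Qed.

Lemma sqnormD_le a b : sqnorm a < +oo -> sqnorm b < +oo ->
  sqnorm (fun i => a i + b i)%R <= ((norm2 a + norm2 b) ^+ 2)%:E.
Proof.
move=> aoo boo.
have weighted c : (0 < c)%R -> sqnorm (fun i => a i + b i)%R <=
    ((1 + c) * norm2 a ^+ 2 + (1 + c^-1) * norm2 b ^+ 2)%:E.
  move=> c0; rewrite EFinD (EFinM (1 + c)) (EFinM (1 + c^-1)) -!sqnorm_norm2 //.
  have c1 : (0 <= 1 + c)%R by rewrite addr_ge0 ?ltW.
  have cV1 : (0 <= 1 + c^-1)%R by rewrite addr_ge0 ?ltW ?invr_gt0.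
  rewrite /sqnorm -!ge0_esumZl // => [|i|i]; last 2 first.
  - by rewrite lee_fin sqr_ge0.
  - by rewrite lee_fin sqr_ge0.
  rewrite -esumD => [|i _|i _]; last 2 first.
  - by rewrite -EFinM lee_fin mulr_ge0 ?sqr_ge0.
  - by rewrite -EFinM lee_fin mulr_ge0 ?sqr_ge0.
  by apply: le_esum => i _; rewrite -!EFinM -EFinD lee_fin sqrD_le_weighted.
have abfin : sqnorm (fun i => a i + b i)%R < +oo.
  by apply: le_lt_trans (weighted 1%R ltr01) _; rewrite ltry.
rewrite sqnorm_norm2 // lee_fin.
apply: le_sqrD_of_weighted; rewrite ?norm2_ge0 // => c c0.
by rewrite -lee_fin -sqnorm_norm2 // weighted.
Qed.

Lemma sqnormD_lt_pinfty a b : sqnorm a < +oo -> sqnorm b < +oo ->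
  sqnorm (fun i => a i + b i)%R < +oo.
Proof. by move=> aoo boo; apply: le_lt_trans (sqnormD_le aoo boo) _; rewrite ltry. Qed.

Lemma sqnormB_lt_pinfty a b : sqnorm a < +oo -> sqnorm b < +oo ->
  sqnorm (fun i => a i - b i)%R < +oo.
Proof. by move=> aoo boo; apply: sqnormD_lt_pinfty; rewrite ?sqnormN. Qed.

Lemma norm2D_le a b : sqnorm a < +oo -> sqnorm b < +oo ->
  (norm2 (fun i => a i + b i) <= norm2 a + norm2 b)%R.
Proof.
move=> aoo boo; have := sqnormD_le aoo boo.
rewrite sqnorm_norm2 ?sqnormD_lt_pinfty // lee_fin.
by rewrite -ler_sqrt ?sqrtr_sqr ?ger0_norm ?addr_ge0 ?norm2_ge0 ?sqr_ge0.
Qed.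

Lemma sqr_norm2B_le a b : sqnorm a < +oo -> sqnorm b < +oo ->
  ((norm2 a - norm2 b) ^+ 2)%:E <= sqnorm (fun i => a i - b i)%R.
Proof.
move=> aoo boo; have abfin := sqnormB_lt_pinfty aoo boo.
have bafin := sqnormB_lt_pinfty boo aoo.
have := norm2D_le abfin boo; have := norm2D_le bafin aoo.
have subK (u v : T -> R) : (fun i => u i - v i + v i)%R = u.
  by apply/funext => i; rewrite subrK.
have -> : norm2 (fun i => b i - a i)%R = norm2 (fun i => a i - b i)%R.
  by rewrite /norm2 -sqnormN; congr (Num.sqrt (fine (sqnorm _))); apply/funext => i; rewrite opprB.
rewrite !subK sqnorm_norm2 // lee_fin; have := norm2_ge0 (fun i => a i - b i)%R.
nra.
Qed.

End SquareNorm.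

Section GroupLaws.
Variable G : cgroup.
Local Notation "x * y" := (gmul x y).
Local Notation "x ^-1" := (ginv x).
Local Notation e := (gone G).
Implicit Types x y z : G.

Lemma gmulgV x : x * x^-1 = e.
Proof.
have : (x^-1^-1 * x^-1) * (x * x^-1) = e.
  by rewrite -gmulA (gmulA x^-1 x) gmulV gmul1 gmulV.
by rewrite gmulV gmul1.
Qed.

Lemma gmulg1 x : x * e = x.
Proof. by rewrite -(gmulV x) gmulA gmulgV gmul1. Qed.

Lemma gmulKg x z : x^-1 * (x * z) = z.
Proof. by rewrite gmulA gmulV gmul1. Qed.

Lemma gmulKVg x z : x * (x^-1 * z) = z.
Proof. by rewrite gmulA gmulgV gmul1. Qed.

Lemma gmulgK x z : z * x * x^-1 = z.
Proof. by rewrite -gmulA gmulgV gmulg1. Qed.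

Lemma gmulgKV x z : z * x^-1 * x = z.
Proof. by rewrite -gmulA gmulV gmulg1. Qed.

Lemma ginv_unique x y : y * x = e -> y = x^-1.
Proof. by move=> yx; rewrite -[y]gmulg1 -(gmulgV x) gmulA yx gmul1. Qed.

Lemma ginvK x : x^-1^-1 = x.
Proof. by apply/esym/ginv_unique; rewrite gmulgV. Qed.

Lemma ginvM x y : (x * y)^-1 = y^-1 * x^-1.
Proof. by apply/esym/ginv_unique; rewrite -gmulA gmulKg gmulV. Qed.

Lemma ginv1 : e^-1 = e.
Proof. by apply/esym/ginv_unique; rewrite gmul1. Qed.

Lemma gconj_eq1 (m g : G) : m^-1 * g * m = e -> g = e.
Proof. by move=> gm; rewrite -(gmulKVg m g) -(gmulgK m (m^-1 * g)) gm gmul1 gmulgV. Qed.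

Lemma malnormal_conj_mem (H : set G) (g h : G) :
  malnormal H -> H g -> g <> e -> H (h^-1 * g * h) -> H h.
Proof.
move=> [[_ [_ HV]] mal] Hg gn Hc; apply/not_notP => Hh; apply: gn.
by apply: (mal h^-1) => [/HV|//|]; rewrite ginvK.
Qed.

Lemma gen2_subgroup (g g' : G) : subgroup (gen2 g g').
Proof.
split; first by move=> S [].
split=> [a b Ha Hb | a Ha] S hS Sg Sg'; have [_ [SM SV]] := hS.
  exact: SM (Ha S hS Sg Sg') (Hb S hS Sg Sg').
exact: SV (Ha S hS Sg Sg').
Qed.

Lemma gen2_l (g g' : G) : gen2 g g' g. Proof. by move=> S. Qed.
Lemma gen2_r (g g' : G) : gen2 g g' g'. Proof. by move=> S. Qed.

End GroupLaws.

Section Vectors.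
Variables (R : realType) (G : cgroup).
Local Notation "x * y" := (gmul x y).
Local Notation "x ^-1" := (ginv x).
Local Notation e := (gone G).
Implicit Types (f h : vec R G) (g m : G).

Lemma actVM g m f : actV g (actV m f) = actV (g * m) f.
Proof. by apply/funext => x; rewrite /actV ginvM gmulA. Qed.

Lemma actV1 f : actV e f = f.
Proof. by apply/funext => x; rewrite /actV ginv1 gmul1. Qed.

Definition vec_uncurry f : G * nat -> R := fun k => f k.1 k.2.

Lemma sqnormV_uncurry f : sqnormV f = sqnorm (vec_uncurry f).
Proof.
rewrite /sqnormV /sqnorm (esum_esum (I := setT) (J := fun _ => setT)) => [|i j _ _].
  by congr esum; apply/seteqP; split.
by rewrite lee_fin sqr_ge0.
Qed.

Lemma sqnormV_actV g f : sqnormV (actV g f) = sqnormV f.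
Proof.
rewrite /sqnormV /actV (reindex_esum setT setT (gmul g)); last first.
  split=> // [a b _ _ gab|y _]; first by rewrite -(gmulKg g a) gab gmulKg.
  by exists (g^-1 * y); rewrite ?gmulKVg.
by apply: eq_esum => x _; rewrite gmulKg.
Qed.

Lemma distV_actV g f h : distV (actV g f) (actV g h) = distV f h.
Proof. by rewrite /distV -(sqnormV_actV g (fun x n => f x n - h x n)). Qed.

Lemma distVC f h : distV f h = distV h f.
Proof.
rewrite /distV; congr (Num.sqrt (fine _)).
by apply: eq_esum => x _; apply: eq_esum => n _; rewrite -sqrrN opprB.
Qed.

Lemma distVxx f : distV f f = 0.
Proof.
rewrite /distV /sqnormV esum1 ?sqrtr0 // => x _.
by rewrite esum1 // => n _; rewrite subrr expr0n.
Qed.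

Lemma sphere_actV g f : sphere f -> sphere (actV g f).
Proof. by rewrite /sphere sqnormV_actV. Qed.

Lemma sphere_sqnorm_lt_pinfty f : sphere f -> (sqnorm (vec_uncurry f) < +oo)%E.
Proof. by rewrite /sphere sqnormV_uncurry => ->; rewrite ltry. Qed.

Lemma distV_norm2 f h :
  distV f h = norm2 (fun k => vec_uncurry f k - vec_uncurry h k).
Proof. by rewrite /distV sqnormV_uncurry. Qed.

Lemma sqnormV_distV f h : sphere f -> sphere h ->
  sqnormV (fun x n => f x n - h x n) = (distV f h ^+ 2)%:E.
Proof.
move=> /sphere_sqnorm_lt_pinfty fS /sphere_sqnorm_lt_pinfty hS.
by rewrite distV_norm2 sqnormV_uncurry -sqnorm_norm2 // sqnormB_lt_pinfty.
Qed.

Lemma distV_triangle f1 f2 f3 : sphere f1 -> sphere f2 -> sphere f3 ->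
  distV f1 f3 <= distV f1 f2 + distV f2 f3.
Proof.
move=> /sphere_sqnorm_lt_pinfty S1 /sphere_sqnorm_lt_pinfty S2 /sphere_sqnorm_lt_pinfty S3.
rewrite !distV_norm2; apply: le_trans (norm2D_le (sqnormB_lt_pinfty S1 S2) (sqnormB_lt_pinfty S2 S3)).
by rewrite le_eqVlt; apply/orP; left; apply/eqP; congr norm2; apply/funext => k; rewrite addrA subrK.
Qed.

Definition displacement f g : R := distV f (actV g f).

Lemma displacement_actV m f g :
  displacement (actV m f) g = displacement f (m^-1 * g * m).
Proof. by rewrite /displacement -[RHS](distV_actV m) !actVM -!gmulA gmulKVg. Qed.

Lemma displacement_le f h g : sphere f -> sphere h ->
  displacement h g <= displacement f g + 2 * distV f h.
Proof.
move=> Sf Sh; have Sgf := sphere_actV g Sf; have Sgh := sphere_actV g Sh.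
rewrite /displacement; apply: le_trans (distV_triangle Sh Sf Sgh) _.
have := distV_triangle Sf Sgf Sgh; rewrite distV_actV (distVC h f); lra.
Qed.

Definition thin_at (delta : R) f := exists2 g, g <> e & displacement f g <= delta.

Definition thin_in (H : set G) (delta : R) f :=
  exists2 g, H g /\ g <> e & displacement f g <= delta.

Lemma thin_at_actV delta m f : thin_at delta (actV m f) -> thin_at delta f.
Proof.
move=> [g gn gd]; exists (m^-1 * g * m); first by move/gconj_eq1.
by rewrite -displacement_actV.
Qed.

Lemma thin_at_orbit delta f h : orbit_eq f h -> thin_at delta f -> thin_at delta h.
Proof.
move=> [m ->] fthin; apply: (thin_at_actV (m := m^-1)).
by rewrite actVM gmulV actV1.
Qed.

Lemma thin_thin_at delta f : thin delta f -> thin_at delta f.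
Proof.
by move=> [_ [_ [_ [m ->] [g gn gd]]]]; apply: (thin_at_actV (m := m)); exists g.
Qed.

End Vectors.

Section Cosets.
Variables (R : realType) (G : cgroup) (L : set G).
Hypothesis L_subgroup : subgroup L.
Local Notation "x * y" := (gmul x y).
Local Notation "x ^-1" := (ginv x).
Local Notation e := (gone G).

Let L1 : L e. Proof. by case: L_subgroup. Qed.
Let LM a b : L a -> L b -> L (a * b). Proof. by case: L_subgroup => _ [SM _]; exact: SM. Qed.
Let LV a : L a -> L a^-1. Proof. by case: L_subgroup => _ [_ SV]; exact: SV. Qed.

Definition coset_rep (w : G) : G := xget e [set v | L (w * v^-1)].
Definition coset_reps : set G := [set c | coset_rep c = c].

Lemma coset_rep_mem w : L (w * (coset_rep w)^-1).
Proof. by apply: (@xgetPex G e [set v | L (w * v^-1)]); exists w; rewrite /= gmulgV; exact: L1. Qed.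

Lemma coset_repM z w : L z -> coset_rep (z * w) = coset_rep w.
Proof.
move=> Lz; rewrite /coset_rep; congr xget; apply/seteqP; split => v /= Lv.
  by have := LM (LV Lz) Lv; rewrite -gmulA gmulKg.
by rewrite -gmulA; apply: LM.
Qed.

Lemma coset_rep_id w : coset_rep (coset_rep w) = coset_rep w.
Proof. by have := coset_repM w (LV (coset_rep_mem w)); rewrite ginvM ginvK gmulgKV. Qed.

Lemma esum_cosets (F : G -> \bar R) : (forall w, (0 <= F w)%E) ->
  \esum_(w in [set: G]) F w = \esum_(c in coset_reps) \esum_(z in L) F (z * c).
Proof.
move=> F0; rewrite (esum_esum (I := coset_reps) (J := fun _ => L) (a := fun c z => F (z * c))) //.
rewrite -(reindex_esum (coset_reps `*`` (fun _ => L)) setT (fun k => k.2 * k.1) F) //.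
split=> //.
- move=> [c1 z1] [c2 z2]; rewrite !inE /= => -[c1r Lz1] [c2r Lz2] zc.
  have c12 : c1 = c2 by rewrite -c1r -c2r -(coset_repM c1 Lz1) -(coset_repM c2 Lz2) zc.
  by subst c2; rewrite -(gmulgK c1 z1) zc gmulgK.
- move=> w _; exists (coset_rep w, w * (coset_rep w)^-1); last exact: gmulgKV.
  by split; [exact: coset_rep_id | exact: coset_rep_mem].
Qed.

End Cosets.

Lemma Kxy_le_test_vector (R : realType) (G : cgroup) (g g' : G) (u : G -> R) (C : R) :
  (forall z, u z != 0 -> gen2 g g' z) -> (sqsum u < +oo)%E -> (0 < sqsum u)%E ->
  (sqsum (fun z => (lreg g u z - u z)%R) + sqsum (fun z => (lreg g' u z - u z)%R)
     <= C%:E * sqsum u)%E ->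
  Kxy R g g' <= Num.sqrt C.
Proof.
rewrite /Kxy.
set a := sqsum (fun z => (lreg g u z - u z)%R).
set b := sqsum (fun z => (lreg g' u z - u z)%R) => supp ufin upos hC.
have a0 : (0 <= a)%E := sqnorm_ge0 _.
have b0 : (0 <= b)%E := sqnorm_ge0 _.
have Cufin : (C%:E * sqsum u < +oo)%E.
  by rewrite [sqsum u](sqnorm_norm2 ufin) -EFinM ltry.
have afin : (a < +oo)%E by apply: le_lt_trans Cufin; apply: le_trans hC; exact: leeDl.
have bfin : (b < +oo)%E by apply: le_lt_trans Cufin; apply: le_trans hC; exact: leeDr.
have u_nz : exists z, u z != 0.
  apply: contrapT => u0; move: upos; rewrite /sqsum esum1 ?ltxx // => z _.
  have [->|uz] := eqVneq (u z) 0; first by rewrite expr0n.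
  by case: u0; exists z.
have ea : a = (norm2 (fun z => lreg g u z - u z) ^+ 2)%:E := sqnorm_norm2 afin.
have eb : b = (norm2 (fun z => lreg g' u z - u z) ^+ 2)%:E := sqnorm_norm2 bfin.
move: hC upos; rewrite ea eb [sqsum u](sqnorm_norm2 ufin).
rewrite -EFinD -EFinM lte_fin lee_fin => hC upos.
have nu0 : 0 < norm2 u by have := norm2_ge0 u; nra.
have C0 : 0 <= C.
  have := sqr_ge0 (norm2 (fun z => lreg g u z - u z)).
  have := sqr_ge0 (norm2 (fun z => lreg g' u z - u z)); nra.
have le_sqrtC v : 0 <= v -> v ^+ 2 <= C * norm2 u ^+ 2 -> v <= Num.sqrt C * norm2 u.
  move=> v0 hv; rewrite -ler_sqr ?nnegrE ?mulr_ge0 ?sqrtr_ge0 //.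
  by rewrite exprMn sqr_sqrtr.
apply: le_trans (_ : Num.max (l2norm (fun z => lreg g u z - u z))
                             (l2norm (fun z => lreg g' u z - u z)) / l2norm u <= _).
  apply: ge_inf; last by exists u; split.
  exists 0 => _ [v [_ _ _ ->]].
  by rewrite divr_ge0 ?sqrtr_ge0 // le_max sqrtr_ge0.
have l2normE (v : G -> R) : l2norm v = norm2 v by [].
rewrite !l2normE ler_pdivrMr // ge_max; apply/andP; split; apply: le_sqrtC; rewrite ?norm2_ge0 //.
- by have := sqr_ge0 (norm2 (fun z => lreg g' u z - u z)); lra.
- by have := sqr_ge0 (norm2 (fun z => lreg g u z - u z)); lra.
Qed.

Section CosetProfile.
Variables (R : realType) (G : cgroup) (g g' : G) (x : vec R G).
Hypothesis x_sphere : sphere x.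
Local Notation "x * y" := (gmul x y).
Local Notation "x ^-1" := (ginv x).
Local Notation L := (gen2 g g').

Let fiber_lt_pinfty w : (sqnorm (x w) < +oo)%E.
Proof.
apply: le_lt_trans (_ : sqnormV x < +oo)%E; last by rewrite x_sphere ltry.
by apply: (@esum_ge_term _ _ setT (fun w => sqnorm (x w))) => // j _; exact: sqnorm_ge0.
Qed.

Let mass c := \esum_(z in L) sqnorm (x (z * c)).
Let defect s c := \esum_(z in L) sqnorm (fun n => x (s^-1 * (z * c)) n - x (z * c) n).

Let esum_mass : \esum_(c in coset_reps L) mass c = 1%E.
Proof.
rewrite /mass -(esum_cosets (gen2_subgroup g g') (F := fun w => sqnorm (x w))) => [|w].
  exact: x_sphere.
exact: sqnorm_ge0.
Qed.

Let esum_defect s :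
  \esum_(c in coset_reps L) defect s c = (displacement x s ^+ 2)%:E.
Proof.
rewrite /defect -(esum_cosets (gen2_subgroup g g')
  (F := fun w => sqnorm (fun n => x (s^-1 * w) n - x w n))) => [|w]; last exact: sqnorm_ge0.
rewrite /displacement -sqnormV_distV //; last exact: sphere_actV.
by apply: eq_esum => w _; apply: eq_esum => n _; rewrite -[in RHS]sqrrN opprB.
Qed.

Definition coset_profile c : G -> R :=
  fun z => if z \in L then norm2 (x (z * c)) else 0.

Let sqsum_profile c : sqsum (coset_profile c) = mass c.
Proof.
rewrite /sqsum /mass [RHS]esum_mkcond; apply: eq_esum => z _; rewrite /coset_profile.
by case: ifP => _; rewrite ?expr0n // -sqnorm_norm2 ?fiber_lt_pinfty.
Qed.

Let sqsum_profile_shift s c : L s ->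
  (sqsum (fun z => (lreg s (coset_profile c) z - coset_profile c z)%R) <= defect s c)%E.
Proof.
move=> Ls; rewrite /defect [leRHS]esum_mkcond; apply: le_esum => z _.
rewrite /lreg /coset_profile; have [_ [LM LV]] := gen2_subgroup g g'.
case: (boolP (z \in L)) => zL.
  have -> : s^-1 * z \in L by apply/mem_set; exact: LM (LV _ Ls) (set_mem zL).
  by rewrite -gmulA sqr_norm2B_le ?fiber_lt_pinfty.
have -> : (s^-1 * z \in L) = false.
  by apply/negbTE; apply: contra zL => /set_mem sz; apply/mem_set; rewrite -(gmulKVg s z); apply: LM.
by rewrite subr0 expr0n.
Qed.

Lemma Kxy_le_displacement :
  Kxy R g g' <= Num.sqrt (displacement x g ^+ 2 + displacement x g' ^+ 2).
Proof.
have [|||c [repc massc hc]] := esum_pigeonhole (S := coset_reps L)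
  (a := fun c => (defect g c + defect g' c)%E) (b := mass)
  (A := displacement x g ^+ 2 + displacement x g' ^+ 2) _ _ _ esum_mass.
- by move=> c; rewrite adde_ge0 // esum_ge0 // => z _; exact: sqnorm_ge0.
- by move=> c; rewrite esum_ge0 // => z _; exact: sqnorm_ge0.
- by rewrite esumD => [|c _|c _]; rewrite ?esum_defect ?esum_ge0 // => z _; exact: sqnorm_ge0.
apply: (Kxy_le_test_vector (u := coset_profile c)); rewrite ?sqsum_profile //.
- by move=> z; rewrite /coset_profile; case: ifP => [/set_mem //|_]; rewrite eqxx.
- apply: le_lt_trans (ltry 1%R); rewrite -esum_mass; apply: esum_ge_term => // d _.
  by apply: esum_ge0 => z _; exact: sqnorm_ge0.
- apply: le_trans hc; apply: leeD; apply: sqsum_profile_shift; [exact: gen2_l | exact: gen2_r].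
Qed.

End CosetProfile.

Lemma I01P (R : realType) (t : R) : I01 t <-> 0 <= t <= 1.
Proof. by rewrite /I01 /= in_itv. Qed.

Lemma I01_1 (R : realType) : I01 (1 : R).
Proof. by apply/I01P; rewrite ler01 lexx. Qed.

Lemma I01_locally_constant (R : realType) (P : R -> Prop) :
  (forall m, I01 m -> exists2 eta, 0 < eta &
     forall s, I01 s -> `|s - m| < eta -> P s <-> P m) ->
  P 0 -> P 1.
Proof.
move=> loc P0.
pose T := [set t : R | 0 <= t <= 1 /\ forall s, 0 <= s <= t -> P s].
have T0 : T 0.
  split=> [|s]; first by rewrite lexx ler01.
  by move=> s0; have -> : s = 0 by apply/le_anti; rewrite andbC.
have Tsup : has_sup T by split; [exists 0 | exists 1 => t [/andP[]]].
set m := sup T.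
have m0 : 0 <= m by apply: sup_upper_bound.
have m1 : m <= 1 by apply: ge_sup; [exists 0 | move=> t [/andP[]]].
have Im : I01 m by apply/I01P; rewrite m0 m1.
have [eta eta0 Pm_near] := loc m Im.
have [t0 Tt0 t0m] := sup_adherent eta0 Tsup; rewrite -/m in t0m.
have t0le : t0 <= m := sup_upper_bound Tsup Tt0.
have [/andP [t00 t01] Pt0] := Tt0.
have Pm : P m.
  apply/(Pm_near t0 _ _).1; first by apply/I01P; rewrite t00 t01.
    by rewrite ltr_norml; apply/andP; split; lra.
  by apply: Pt0; rewrite t00 lexx.
have [far|close] := leP eta (1 - m); last first.
  apply/(Pm_near 1 _ _).2 => //; first exact: I01_1.
  by rewrite ger0_norm; lra.
have : T (m + eta / 2).
  split=> [|s /andP[s0 sle]]; first by apply/andP; split; lra.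
  have [st0|st0] := leP s t0; first by apply: Pt0; rewrite s0 st0.
  apply/(Pm_near s _ _).2 => //; first by apply/I01P; apply/andP; split; lra.
  by rewrite ltr_norml; apply/andP; split; lra.
by move/(sup_upper_bound Tsup); rewrite -/m; lra.
Qed.

Lemma pathcomp_thin_at (R : realType) (G : cgroup) (delta : R) (x0 f : vec R G) :
  pathcomp (thin delta) x0 f -> thin_at delta f.
Proof.
move=> [_ [p [_ _ p1f p_thin]]].
exact/(thin_at_orbit p1f)/thin_thin_at/p_thin/I01_1.
Qed.

Section Rigidity.
Variables (R : realType) (G : cgroup) (E : set (set G)) (H : set G) (alpha : R).
Hypotheses (K_alpha : K_local_ge E alpha) (EH : E H) (alpha_gt0 : 0 < alpha).
Local Notation delta := (alpha / 4).

Lemma mem_of_small_displacements (x : vec R G) (g g' : G) :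
  H g -> g <> gone G -> sphere x ->
  Num.sqrt (displacement x g ^+ 2 + displacement x g' ^+ 2) < alpha -> H g'.
Proof.
move=> Hg gn xS small; apply: contrapT => Hg'.
have := le_trans (K_alpha EH Hg gn Hg') (Kxy_le_displacement g g' xS).
by rewrite leNgt small.
Qed.

Lemma mem_of_nearby_displacements (f h : vec R G) (g' : G) :
  sphere f -> sphere h -> thin_in H delta f -> distV f h <= delta ->
  displacement h g' <= delta -> H g'.
Proof.
move=> fS hS [g [Hg gn] fg] fh hg'; apply: (mem_of_small_displacements Hg gn hS).
have a0 : 0 < alpha := alpha_gt0.
have hg : displacement h g <= 3 * delta.
  by have := displacement_le g fS hS; lra.
have hg2 : displacement h g ^+ 2 <= (3 * delta) ^+ 2.
  by rewrite ler_sqr ?nnegrE ?sqrtr_ge0 //; lra.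
have hg'2 : displacement h g' ^+ 2 <= delta ^+ 2.
  by rewrite ler_sqr ?nnegrE ?sqrtr_ge0 //; lra.
rewrite -[alpha in _ < alpha]ger0_norm ?(ltW alpha_gt0) // -sqrtr_sqr.
by rewrite ltr_sqrt ?exprn_gt0 //; nra.
Qed.

Lemma thin_in_near (f h : vec R G) :
  sphere f -> sphere h -> distV f h <= delta ->
  thin_in H delta f -> thin_at delta h -> thin_in H delta h.
Proof.
move=> fS hS fh f_thin [g' g'n hg']; exists g' => //; split => //.
exact: (mem_of_nearby_displacements fS hS f_thin fh hg').
Qed.

Lemma thin_in_path (q : R -> vec R G) : spath q ->
  (forall t, I01 t -> thin_at delta (q t)) ->
  thin_in H delta (q 0) -> thin_in H delta (q 1).
Proof.
move=> [qS q_cont] q_thin.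
apply: (I01_locally_constant (P := fun t => thin_in H delta (q t))) => m Im.
have [|eta eta0 q_near] := q_cont m Im delta; first by rewrite divr_gt0.
exists eta => // s Is sm; have /ltW qsm := q_near s Is sm.
have [[qsS _] [qmS _]] := (qS s Is, qS m Im).
split=> [s_thin|m_thin]; first exact: thin_in_near qsS qmS qsm s_thin (q_thin m Im).
by apply: thin_in_near qmS qsS _ m_thin (q_thin s Is); rewrite distVC.
Qed.

Lemma mem_of_thin_in_actV (x0 : vec R G) (h : G) : malnormal H -> sphere x0 ->
  thin_in H delta x0 -> thin_in H delta (actV h x0) -> H h.
Proof.
move=> H_mal x0S x0_thin [g [Hg gn] gd].
apply: (malnormal_conj_mem H_mal Hg gn).
have delta_ge0 : 0 <= delta by rewrite divr_ge0 // ltW.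
apply: (mem_of_nearby_displacements x0S x0S x0_thin); first by rewrite distVxx.
by rewrite -displacement_actV.
Qed.

End Rigidity.

Theorem lemma6p3 (R : realType) (alpha : R) : 0 < alpha ->
  exists2 delta : R, 0 < delta &
  forall (G : cgroup) (E : set (set G)),
    (forall H, E H -> malnormal H) -> covering E -> K_local_ge E alpha ->
    forall x0 : vec R G, thin delta x0 ->
    let Rc := pathcomp (thin delta) x0 in
    exists2 H, E H &
      forall p : R -> vec R G,
        qpath p -> orbit_eq (p 0) x0 -> orbit_eq (p 1) x0 ->
        (forall t, I01 t -> Rc (p t)) ->
        forall q : R -> vec R G,
          spath q -> (forall t, I01 t -> orbit_eq (p t) (q t)) -> q 0 = x0 ->
          exists2 h, H h & q 1 = actV h x0.
Proof.
move=> alpha_gt0; exists (alpha / 4); first by rewrite divr_gt0.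
move=> G E E_mal E_cov K_alpha x0 x0_thin Rc.
have x0S : sphere x0 by case: x0_thin => [[]].
have [g0 g0n g0d] := thin_thin_at x0_thin.
have [H EH Hg0] := E_cov g0.
have x0_thin_in : thin_in H (alpha / 4) x0 by exists g0.
exists H => // p _ _ [a p1] Rc_p q q_path pq q0.
have [b qb] := pq 1 (I01_1 R).
have q1 : q 1 = actV (gmul b (ginv a)) x0 by rewrite qb p1 actVM gmulgKV.
exists (gmul b (ginv a)) => //.
apply: (mem_of_thin_in_actV K_alpha EH alpha_gt0 (E_mal H EH) x0S x0_thin_in).
rewrite -q1; apply: (thin_in_path K_alpha EH alpha_gt0 q_path); last by rewrite q0.
by move=> t It; apply: thin_at_orbit (pq t It) _; exact: pathcomp_thin_at (Rc_p t It).
Qed.
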